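(* Let $n\ge 2$. The function $\mathbf{H}:[0,1]^n\to[0,1]$ has no zero divisor, i.e. there is no $a\in\,]0,1[$ such that $\mathbf{H}(\mathbf{x})=0$ for every $\mathbf{x}\in\,]0,1]^n$ having $a$ as one of its coordinates.
   Context: For $\mathbf{x}\in[0,1]^n$ let $x_{(1)}\ge\dots\ge x_{(n)}$ be its entries in decreasing order, and define the median $Med(\mathbf{x})=\frac12(x_{(k)}+x_{(k+1)})$ if $n=2k$ and $Med(\mathbf{x})=x_{(k+1)}$ if $n=2k+1$. Define $f_i(\mathbf{x})=\frac1n$ if $x_1=\dots=x_n$, and otherwise $f_i(\mathbf{x})=\frac{1}{n-1}\Big(1-\frac{|x_i-Med(\mathbf{x})|}{\sum_{j=1}^n|x_j-Med(\mathbf{x})|}\Big)$. Then $\mathbf{H}(\mathbf{x})=\sum_{i=1}^n f_i(\mathbf{x})\,x_i$. *)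

From mathcomp Require Import all_boot all_order all_algebra.
Set Implicit Arguments. Unset Strict Implicit. Unset Printing Implicit Defensive.
Import Order.TTheory GRing.Theory Num.Theory.
Local Open Scope ring_scope.

Section Hdef.
Variable R : realFieldType.
Variable n : nat.

(* entries of x sorted in decreasing order: x_(1) >= ... >= x_(n);
   (sorted_desc x)`_k is x_(k+1) (0-based indexing). *)
Definition sorted_desc (x : 'I_n -> R) : seq R :=
  sort (fun a b : R => b <= a) [seq x i | i <- enum 'I_n].

Definition Med (x : 'I_n -> R) : R :=
  let s := sorted_desc x in
  let k := n./2 in
  if odd n then s`_k else (s`_k.-1 + s`_k) / 2.

Definition all_equal (x : 'I_n -> R) : bool :=
  [forall i, forall j, x i == x j].

Definition fw (x : 'I_n -> R) (i : 'I_n) : R :=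
  if all_equal x then n%:R^-1
  else (n.-1)%:R^-1 *
       (1 - `|x i - Med x| / \sum_(j < n) `|x j - Med x|).

Definition H (x : 'I_n -> R) : R := \sum_(i < n) fw x i * x i.

End Hdef.

From mathcomp Require Import all_boot all_order all_algebra.
Import Order.TTheory GRing.Theory Num.Theory.
Local Open Scope ring_scope.

Lemma all_equal_cst (R : realFieldType) (n : nat) (a : R) :
  all_equal (fun _ : 'I_n => a).
Proof. by apply/forallP => i; apply/forallP. Qed.

Lemma H_cst (R : realFieldType) (n : nat) (a : R) :
  (0 < n)%N -> H (fun _ : 'I_n => a) = a.
Proof.
move=> n_gt0; rewrite /H /fw all_equal_cst sumr_const card_ord.
by rewrite -mulrnAl -mulr_natl mulfV ?mul1r // pnatr_eq0 -lt0n.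
Qed.

Theorem proposition14 (R : realFieldType) (n : nat) :
  (2 <= n)%N ->
  ~ (exists a : R, 0 < a < 1 /\
       forall x : 'I_n -> R,
         (forall i, 0 < x i <= 1) -> (exists i, x i = a) -> H x = 0).
Proof.
move=> n_ge2 [a [/andP[a_gt0 a_lt1] H_zero]].
have n_gt0 : (0 < n)%N by apply: leq_trans n_ge2.
have : H (fun _ : 'I_n => a) = 0.
  apply: H_zero => [i|]; first by rewrite a_gt0 ltW.
  by exists (Ordinal n_gt0).
by rewrite H_cst // => a_eq0; rewrite a_eq0 ltxx in a_gt0.
Qed.
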